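(* Let $S$ be a $d\times d$ symmetric positive semidefinite matrix with $S_{ii}>0$ for all $i$. For any $\rho>0$, the graphical lasso problem of minimizing $-\log\det K+\operatorname{tr}(SK)+\rho\sum_{i\ne j}|K_{ij}|$ over positive definite $K$ has an optimum, and it is unique. More generally, for symmetric $L,U$ with entries in $\mathbb{R}\cup\{\pm\infty\}$, $L_{ii}=U_{ii}=0$ and $L_{ij}<0<U_{ij}$ for all $i\ne j$, the problem of minimizing $-\log\det K+\operatorname{tr}(SK)+\sum_{i\neq j}\max\{L_{ij}K_{ij},U_{ij}K_{ij}\}$ over positive definite $K$ (convention $\pm\infty\cdot0=0$) has a unique optimum. *)

From HB Require Import structures.
From mathcomp Require Import all_boot all_order all_algebra.
From mathcomp Require Import classical_sets reals constructive_ereal ereal exp.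
Set Implicit Arguments. Unset Strict Implicit. Unset Printing Implicit Defensive.
Import Order.TTheory GRing.Theory Num.Theory.
Local Open Scope ring_scope.

Definition psdmx (R : realType) (d : nat) (A : 'M[R]_d) : Prop :=
  A^T = A /\ forall x : 'cV[R]_d, 0 <= (x^T *m A *m x) 0 0.

Definition pdmx (R : realType) (d : nat) (A : 'M[R]_d) : Prop :=
  A^T = A /\ forall x : 'cV[R]_d, x != 0 -> 0 < (x^T *m A *m x) 0 0.

Definition glasso_obj (R : realType) (d : nat) (S : 'M[R]_d) (rho : R)
    (K : 'M[R]_d) : R :=
  - ln (\det K) + \tr (S *m K)
  + rho * \sum_(i < d) \sum_(j < d | i != j) `|K i j|.

(* generalized objective: -log det K + tr(SK) + sum_{i<>j} max(L_ij K_ij, U_ij K_ij),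
   computed in \bar R; MathComp's ereal product satisfies (+-oo) * 0 = 0. *)
Definition gen_obj (R : realType) (d : nat) (S : 'M[R]_d)
    (L U : 'M[\bar R]_d) (K : 'M[R]_d) : \bar R :=
  ((- ln (\det K) + \tr (S *m K))%:E
   + \sum_(i < d) \sum_(j < d | i != j)
       maxe (L i j * (K i j)%:E) (U i j * (K i j)%:E))%E.

(* Both objectives are strictly convex on the positive definite cone and have
   compact sublevel sets there.

   Strict convexity comes from ln det.  Whitening by the midpoint M = (A + B)/2
   turns A and B into N_A, N_B with N_A + N_B = 2, and for a positive definite N
   with Cholesky factor T, ln det N = sum_i ln T_ii^2 <= sum_i (sum_k T_ik^2 - 1)
   = tr N - n, with equality only for N = 1.  Trace and penalty are convex.

   Compactness: tr(SK) >= 0 for S positive semidefinite, so the objective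
   bounds -ln det K, i.e. det K stays away from 0.  A small multiple t tr(SK)
   has its off-diagonal part dominated by the penalty, which leaves
   t sum_i S_ii K_ii - ln det K, and with Hadamard's ln det K <= sum_i ln K_ii
   this bounds the diagonal of K, hence all of K.

   In the generalized problem an infinite bound U_ij = +oo (L_ij = -oo) only
   imposes the closed convex constraint K_ij <= 0 (K_ij >= 0); the finite
   bounds give positive penalty weights. *)

From HB Require Import structures.
From mathcomp Require Import all_boot all_order all_algebra.
From mathcomp Require Import all_classical all_reals all_analysis.
From mathcomp Require Import ring lra.
Import Order.TTheory GRing.Theory Num.Theory numFieldNormedType.Exports.
Set Implicit Arguments. Unset Strict Implicit. Unset Printing Implicit Defensive.
Local Open Scope classical_set_scope.
Local Open Scope ring_scope.

Local Notation qform A x := ((x^T *m A *m x) ord0 ord0).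
Local Notation delta_cV i := (delta_mx i (ord0 : 'I_1)).

Lemma mxDE (R : nmodType) m n (A B : 'M[R]_(m, n)) i j :
  (A + B) i j = A i j + B i j.
Proof. exact: mxE. Qed.

Lemma mxZE (R : pzRingType) m n c (A : 'M[R]_(m, n)) i j : (c *: A) i j = c * A i j.
Proof. exact: mxE. Qed.

Section QuadraticForm.
Variables (R : realType) (n : nat).
Implicit Types (A B K P : 'M[R]_n) (x y : 'cV[R]_n).

Lemma qform_delta A i j :
  ((delta_cV i)^T *m A *m delta_cV j) ord0 ord0 = A i j.
Proof. by rewrite trmx_delta -rowE -colE !mxE. Qed.

Lemma qformD A B x : qform (A + B) x = qform A x + qform B x.
Proof. by rewrite mulmxDr mulmxDl mxDE. Qed.

Lemma qformZ c A x : qform (c *: A) x = c * qform A x.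
Proof. by rewrite -scalemxAr -scalemxAl mxZE. Qed.

Lemma bilinear_sym K x y : K^T = K ->
  (x^T *m K *m y) ord0 ord0 = (y^T *m K *m x) ord0 ord0.
Proof.
move=> sK; rewrite -[in LHS]sK.
have -> : x^T *m K^T *m y = (y^T *m K *m x)^T by rewrite !trmx_mul trmxK mulmxA.
by rewrite mxE.
Qed.

Lemma qformDZ K x y t : K^T = K ->
  qform K (x + t *: y) =
  qform K x + 2 * t * (y^T *m K *m x) ord0 ord0 + t ^+ 2 * qform K y.
Proof.
move=> sK; have -> : (x + t *: y)^T = x^T + t *: y^T by rewrite linearD /= linearZ.
rewrite !mulmxDl !mulmxDr -!scalemxAl -!scalemxAr.
by rewrite !(mxDE, mxZE) (bilinear_sym x y sK); ring.
Qed.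

Lemma pdmx_diag_gt0 K i : pdmx K -> 0 < K i i.
Proof.
move=> [_ hK]; rewrite -qform_delta; apply: hK.
by apply/eqP => /matrixP /(_ i ord0); rewrite !mxE !eqxx => /eqP; rewrite oner_eq0.
Qed.

Lemma pdmx_psdmx K : pdmx K -> psdmx K.
Proof.
move=> [sK hK]; split => // x; have [->|x0] := eqVneq x 0.
  by rewrite mulmx0 mxE.
exact/ltW/hK.
Qed.

Lemma pdmx1 : pdmx (1%:M : 'M[R]_n).
Proof.
split=> [|x x0]; first exact: trmx1.
rewrite mulmx1 mxE; under eq_bigr do rewrite mxE -expr2.
rewrite lt_def sumr_ge0 ?andbT => [|i _]; last exact: sqr_ge0.
apply: contraNN x0 => /eqP /psumr_eq0P sq0; apply/eqP/matrixP => i j.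
rewrite (ord1 j) mxE; apply/eqP; rewrite -sqrf_eq0; apply/eqP.
exact: sq0 (fun k _ => sqr_ge0 _) i isT.
Qed.

Lemma pdmx_midpoint A B : pdmx A -> pdmx B -> pdmx (2^-1 *: (A + B)).
Proof.
move=> [sA hA] [sB hB]; split=> [|x x0]; first by rewrite linearZ linearD /= sA sB.
by rewrite qformZ qformD mulr_gt0 ?invr_gt0 ?addr_gt0 ?hA ?hB.
Qed.

Lemma pdmx_congr A P : pdmx A -> P \in unitmx -> pdmx (P *m A *m P^T).
Proof.
move=> [sA hA] Pu; split=> [|x x0]; first by rewrite !trmx_mul trmxK sA mulmxA.
have -> : x^T *m (P *m A *m P^T) *m x = (P^T *m x)^T *m A *m (P^T *m x).
  by rewrite trmx_mul trmxK !mulmxA.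
apply: hA; apply: contraNneq x0 => PTx0.
by rewrite -(mulKmx (_ : P^T \in unitmx) x) ?unitmx_tr // PTx0 mulmx0.
Qed.

Lemma quadratic_ge0_linear_coef0 (b c : R) :
  (forall t, 0 <= 2 * t * b + t ^+ 2 * c) -> b = 0.
Proof.
move=> h; have c0 : 0 <= c by have := h 1; have := h (-1); rewrite !expr2; lra.
have c1 : 0 < 1 + c by lra.
have := h (- b / (1 + c)).
rewrite (_ : _ + _ = - (b ^+ 2 * (2 + c)) / (1 + c) ^+ 2); last by field; rewrite gt_eqF.
rewrite pmulr_lge0 ?invr_gt0 ?exprn_gt0 // oppr_ge0 pmulr_lle0 ?ltr_wpDr //.
by move=> b2; apply/eqP; rewrite -sqrf_eq0 eq_le b2 sqr_ge0.
Qed.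

Lemma psdmx_qform_eq0 K x : psdmx K -> qform K x = 0 -> K *m x = 0.
Proof.
move=> [sK hK] qx0; apply/matrixP => i j; rewrite (ord1 j) [RHS]mxE.
have -> : (K *m x) i ord0 = ((delta_cV i)^T *m K *m x) ord0 ord0.
  by rewrite trmx_delta -mulmxA -rowE [RHS]mxE.
apply: quadratic_ge0_linear_coef0 (qform K (delta_cV i)) _ => t.
by have := hK (x + t *: delta_cV i); rewrite qformDZ // qx0 add0r.
Qed.

Lemma psdmx_unitmx_pdmx K : psdmx K -> K \in unitmx -> pdmx K.
Proof.
move=> hK Ku; split=> [|x x0]; first exact: hK.1.
rewrite lt_def hK.2 andbT; apply: contraNneq x0 => /(psdmx_qform_eq0 hK) Kx0.
by rewrite -(mulKmx Ku x) Kx0 mulmx0.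
Qed.

Lemma psdmx_offdiag_le K i j : psdmx K -> `|K i j| <= (K i i + K j j) / 2.
Proof.
move=> [sK hK]; have Kji : K j i = K i j by rewrite -[in LHS]sK mxE.
have qij t : 0 <= K i i + 2 * t * K i j + t ^+ 2 * K j j.
  have := hK (delta_cV i + t *: delta_cV j).
  by rewrite qformDZ // !qform_delta Kji.
have := qij 1; have := qij (-1); rewrite !expr2 ler_norml; lra.
Qed.

End QuadraticForm.

Section Cholesky.
Variable R : realType.

Lemma block_mx_sym n (K : 'M[R]_(1 + n)) : K^T = K ->
  K = block_mx (K ord0 ord0)%:M (ursubmx K) (ursubmx K)^T (drsubmx K).
Proof.
move=> sK; rewrite -{1}[K]submxK; congr block_mx; last by rewrite trmx_ursub sK.
by rewrite [LHS]mx11_scalar !mxE; congr (K _ _)%:M; exact: val_inj.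
Qed.

Lemma schur_complement_qform n (a : R) (b : 'rV[R]_n) (D : 'M[R]_n)
    (x : 'cV[R]_n) : a != 0 ->
  let y := col_mx (- (a^-1 * (b *m x) ord0 ord0))%:M x : 'cV[R]_(1 + n) in
  qform (block_mx a%:M b b^T D) y = qform (D - a^-1 *: (b^T *m b)) x.
Proof.
move=> a0 y; set beta := (b *m x) ord0 ord0.
have bx : b *m x = beta%:M by rewrite [LHS]mx11_scalar.
have xb : x^T *m b^T = beta%:M by rewrite -trmx_mul bx tr_scalar_mx.
have mx11E c : (c%:M : 'M[R]_1) ord0 ord0 = c by rewrite mxE eqxx mulr1n.
rewrite /y tr_col_mx tr_scalar_mx mul_row_block mul_row_col.
rewrite !mulmxBr !mulmxBl -!scalemxAr -!scalemxAl mulmxDl xb.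
rewrite !mul_mx_scalar !mul_scalar_mx mulmxDl -!mulmxA bx mul_mx_scalar.
rewrite -scalemxAl -scalemxAr bx xb.
by rewrite !(mxDE, mxZE, mx11E, mxE) -/beta; field.
Qed.

Lemma pdmx_schur_complement n (a : R) (b : 'rV[R]_n) (D : 'M[R]_n) :
  pdmx (block_mx a%:M b b^T D) -> pdmx (D - a^-1 *: (b^T *m b)).
Proof.
move=> hK; have a_gt0 : 0 < a.
  by have := pdmx_diag_gt0 (lshift n ord0) hK; rewrite block_mxEul mxE eqxx.
have [sK qK] := hK; have sD : D^T = D.
  by move: sK; rewrite tr_block_mx => /eq_block_mx[_ _ _ ->].
split=> [|x x0]; first by rewrite linearB /= linearZ /= trmx_mul trmxK sD.
rewrite -schur_complement_qform ?gt_eqF //; apply: qK.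
by rewrite col_mx_eq0 negb_and x0 orbT.
Qed.

Theorem pdmx_cholesky n (K : 'M[R]_n) : pdmx K ->
  exists T, [/\ is_trig_mx T, forall i, 0 < T i i & K = T *m T^T].
Proof.
elim: n K => [|n IH] K hK.
  by exists 0; split; [apply/is_trig_mxP => -[] | case | apply/matrixP => -[]].
suff {K hK} step : forall K : 'M[R]_(1 + n), pdmx K -> exists T : 'M[R]_(1 + n),
    [/\ is_trig_mx T, forall i, 0 < T i i & K = T *m T^T] by exact: step.
move=> K hK; have KE := block_mx_sym hK.1; move: KE hK.
set a := K ord0 ord0; set b := ursubmx K; set D := drsubmx K => KE hK.
have a_gt0 : 0 < a := pdmx_diag_gt0 ord0 hK.
have hblock : pdmx (block_mx a%:M b b^T D) by rewrite -KE.
have [T' [T'trig T'pos T'E]] := IH _ (pdmx_schur_complement hblock).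
pose s := Num.sqrt a; have s_gt0 : 0 < s by rewrite sqrtr_gt0.
have ss : s * s = a by rewrite -expr2 sqr_sqrtr // ltW.
exists (block_mx s%:M 0 (s^-1 *: b^T) T'); split.
- by rewrite is_trig_block_mx // eqxx scalar_mx_is_trig T'trig.
- move=> i; case: (split_ordP i) => j ->; last by rewrite block_mxEdr.
  by rewrite block_mxEul (ord1 j) mxE eqxx.
- rewrite tr_block_mx mulmx_block {1}KE !trmx0 !mulmx0 !mul0mx !addr0.
  rewrite tr_scalar_mx -scalar_mxM ss linearZ /= trmxK mul_scalar_mx mul_mx_scalar.
  rewrite !scalerA mulfV ?gt_eqF // !scale1r -scalemxAl -scalemxAr scalerA -T'E.
  by rewrite -invfM ss addrC subrK.
Qed.

Lemma mulmx_trmx_diag n (T : 'M[R]_n) i : (T *m T^T) i i = \sum_k T i k ^+ 2.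
Proof. by rewrite mxE; apply: eq_bigr => k _; rewrite mxE expr2. Qed.

Lemma det_mulmx_trmx_trig n (T : 'M[R]_n) : is_trig_mx T ->
  \det (T *m T^T) = \prod_i T i i ^+ 2.
Proof.
move=> Ttrig; rewrite det_mulmx det_tr det_trig // -big_split /=.
by apply: eq_bigr => i _; rewrite expr2.
Qed.

Lemma pdmx_det_gt0 n (K : 'M[R]_n) : pdmx K -> 0 < \det K.
Proof.
move=> /pdmx_cholesky[T [Ttrig Tpos ->]]; rewrite det_mulmx_trmx_trig //.
by apply: prodr_gt0 => i _; rewrite exprn_gt0.
Qed.

Lemma pdmx_whitening n (M : 'M[R]_n) : pdmx M ->
  exists2 P, P \in unitmx & P *m M *m P^T = 1%:M.
Proof.
move=> /pdmx_cholesky[T [Ttrig Tpos ->]].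
have Tu : T \in unitmx.
  by rewrite unitmxE unitfE det_trig // gt_eqF // prodr_gt0.
exists (invmx T); first by rewrite unitmx_inv.
by rewrite !mulmxA mulVmx // mul1mx -trmx_mul mulVmx // trmx1.
Qed.

Lemma mxtrace_psdmx_pdmx_ge0 n (P K : 'M[R]_n) : psdmx P -> pdmx K ->
  0 <= \tr (P *m K).
Proof.
move=> [_ qP] /pdmx_cholesky[T [_ _ ->]].
rewrite mulmxA mxtrace_mulC; apply: sumr_ge0 => i _.
rewrite -qform_delta; set e := delta_cV i.
have -> : e^T *m (T^T *m (P *m T)) *m e = (T *m e)^T *m P *m (T *m e).
  by rewrite trmx_mul !mulmxA.
exact: qP.
Qed.

End Cholesky.

Section LogDet.
Variable R : realType.

Lemma ln_prod (I : Type) (r : seq I) (P : pred I) (f : I -> R) :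
  (forall i, P i -> 0 < f i) ->
  ln (\prod_(i <- r | P i) f i) = \sum_(i <- r | P i) ln (f i).
Proof.
move=> f_gt0.
suff [] : 0 < \prod_(i <- r | P i) f i /\
  ln (\prod_(i <- r | P i) f i) = \sum_(i <- r | P i) ln (f i) by [].
elim/big_rec2: _ => [|i y1 y2 Pi [y1_gt0 <-]]; first by rewrite ln1.
by rewrite mulr_gt0 ?f_gt0 // lnM // posrE f_gt0.
Qed.

Lemma ln_le_subr1 (y : R) : 0 < y -> ln y <= y - 1.
Proof. by move=> y_gt0; have := expR_ge1Dx (ln y); rewrite lnK ?posrE //; lra. Qed.

Lemma ln_lt_subr1 (y : R) : 0 < y -> y != 1 -> ln y < y - 1.
Proof.
move=> y_gt0 y1; have := @expR_gt1Dx R (ln y).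
by rewrite ln_eq0 // y1 lnK ?posrE // => /(_ isT); lra.
Qed.

Lemma ln_det_le_sum_ln_diag n (K : 'M[R]_n) : pdmx K ->
  ln (\det K) <= \sum_i ln (K i i).
Proof.
move=> hK; have [T [Ttrig Tpos KE]] := pdmx_cholesky hK.
rewrite {1}KE det_mulmx_trmx_trig // ln_prod => [|i _]; last by rewrite exprn_gt0.
apply: ler_sum => i _; have Kii_gt0 := pdmx_diag_gt0 i hK.
rewrite ler_ln ?posrE ?exprn_gt0 ?Tpos //.
by rewrite KE mulmx_trmx_diag (bigD1 i) //= lerDl; apply: sumr_ge0 => k _; exact: sqr_ge0.
Qed.

Lemma cholesky_ln_diag_le n (T : 'M[R]_n) i : 0 < T i i ->
  ln (T i i ^+ 2) <= (T *m T^T) i i - 1.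
Proof.
move=> Tii_gt0; apply: le_trans (ln_le_subr1 (exprn_gt0 2 Tii_gt0)) _.
rewrite lerB // mulmx_trmx_diag (bigD1 i) //= lerDl.
by apply: sumr_ge0 => k _; exact: sqr_ge0.
Qed.

Lemma cholesky_ln_diag_eq n (T : 'M[R]_n) i : 0 < T i i ->
  ln (T i i ^+ 2) = (T *m T^T) i i - 1 -> row i T = row i 1%:M.
Proof.
move=> Tii_gt0 eq_i; set off := \sum_(k | k != i) T i k ^+ 2.
have TTii : (T *m T^T) i i = T i i ^+ 2 + off by rewrite mulmx_trmx_diag (bigD1 i).
have off_ge0 : 0 <= off by apply: sumr_ge0 => k _; exact: sqr_ge0.
have Tii2 : T i i ^+ 2 = 1.
  apply/eqP/negPn/negP => /(ln_lt_subr1 (exprn_gt0 2 Tii_gt0)).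
  by rewrite eq_i TTii => ?; lra.
have off0 : off = 0 by move: eq_i; rewrite TTii Tii2 ln1; lra.
apply/rowP => k; rewrite !mxE; have [<-|ki] := eqVneq i k.
  move/eqP: Tii2; rewrite sqrf_eq1 => /orP[/eqP -> //|/eqP Tii].
  by move: Tii_gt0; rewrite Tii oppr_gt0 ltr10.
have /eqP : T i k ^+ 2 = 0.
  by apply: (psumr_eq0P (fun k _ => sqr_ge0 (T i k)) off0); rewrite eq_sym.
by rewrite sqrf_eq0 => /eqP.
Qed.

Lemma ln_det_lt_mxtrace n (N : 'M[R]_n) : pdmx N -> N != 1%:M ->
  ln (\det N) < \tr N - n%:R.
Proof.
move=> hN N1; have [T [Ttrig Tpos NE]] := pdmx_cholesky hN.
have [i Ti] : exists i, row i T != row i 1%:M.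
  apply/existsP; apply: contraNT N1 => /existsPn Trow.
  rewrite NE (_ : T = 1%:M) ?trmx1 ?mulmx1 //.
  by apply/row_matrixP => i; apply/eqP/negPn.
rewrite NE det_mulmx_trmx_trig // ln_prod => [|j _]; last by rewrite exprn_gt0.
rewrite /mxtrace -[n in n%:R]card_ord -sumr_const -sumrB.
rewrite (bigD1 i) //= [ltRHS](bigD1 i) //=.
rewrite ltr_leD //; last by apply: ler_sum => j _; exact: cholesky_ln_diag_le.
rewrite lt_neqAle cholesky_ln_diag_le // andbT.
by apply: contraNneq Ti => /(cholesky_ln_diag_eq (Tpos i)) ->.
Qed.

Lemma ln_det_le_mxtrace n (N : 'M[R]_n) : pdmx N -> ln (\det N) <= \tr N - n%:R.
Proof.
move=> hN; have [->|N1] := eqVneq N 1%:M.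
  by rewrite det1 ln1 mxtrace1 subrr.
exact/ltW/ln_det_lt_mxtrace.
Qed.

Lemma ln_det_midpoint_lt n (A B : 'M[R]_n) : pdmx A -> pdmx B -> A != B ->
  ln (\det A) + ln (\det B) < 2 * ln (\det (2^-1 *: (A + B))).
Proof.
move=> hA hB AB; set M := 2^-1 *: (A + B); have hM : pdmx M := pdmx_midpoint hA hB.
have [P Pu PMP] := pdmx_whitening hM.
set NA := P *m A *m P^T; set NB := P *m B *m P^T.
have NAB : NA + NB = 2%:R *: 1%:M.
  rewrite -PMP -mulmxDl -mulmxDr /M scalemxAl scalemxAr scalerA.
  by rewrite mulrV ?unitfE ?pnatr_eq0 // scale1r.
have detM_gt0 : 0 < \det M := pdmx_det_gt0 hM.
have detP2 : \det P ^+ 2 = (\det M)^-1.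
  apply: (mulIf (lt0r_neq0 detM_gt0)); rewrite mulVf ?lt0r_neq0 //.
  by have := congr1 determinant PMP; rewrite det1 !det_mulmx det_tr => <-; ring.
have ln_det_N C : pdmx C -> ln (\det (P *m C *m P^T)) = ln (\det C) - ln (\det M).
  move=> hC; rewrite !det_mulmx det_tr mulrAC -expr2 detP2 mulrC.
  by rewrite lnM ?posrE ?invr_gt0 ?pdmx_det_gt0 // lnV ?posrE.
have NA1 : NA != 1%:M.
  apply: contraNneq AB => NA1; have PTu : P^T \in unitmx by rewrite unitmx_tr.
  have : NA = P *m M *m P^T by rewrite PMP.
  move=> /(can_inj (mulmxK PTu))/(can_inj (mulKmx Pu)) AM.
  have : 2%:R *: A = A + B.
    by rewrite {1}AM /M scalerA mulrV ?unitfE ?pnatr_eq0 // scale1r.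
  by rewrite scaler_nat mulr2n => /addrI ->.
have trN : \tr NA + \tr NB = 2 * n%:R by rewrite -mxtraceD NAB mxtraceZ mxtrace1.
have := ln_det_lt_mxtrace (pdmx_congr hA Pu) NA1.
have := ln_det_le_mxtrace (pdmx_congr hB Pu).
rewrite !ln_det_N //; lra.
Qed.

End LogDet.

Section MatrixTopology.
Variables (R : realType) (m n : nat).

Lemma vec_mx_continuous : continuous (@vec_mx R m n).
Proof.
move=> v; apply/(cvgrPdist_le (FF := nbhs_filter v)) => e e_gt0.
have near_v : \forall w \near v,
    forall k, `|v ord0 k - (w : 'rV[R]_(m * n)) ord0 k| <= e.
  apply: (filter_forall (nbhs_filter v)) => k.
  by move: (@coord_continuous R 1 (m * n) ord0 k v) => /cvgrPdist_le /(_ e e_gt0).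
apply: filterS near_v => w vw.
rewrite [leLHS]/Num.Def.normr /= mx_normrE (bigmax_le _ (ltW e_gt0)) //= => -[i j] _.
by rewrite !mxE /=; exact: vw.
Qed.

Lemma mx_closed_bounded_compact (A : set 'M[R]_(m, n)) (c : R) : closed A ->
  (forall M, A M -> forall i j, `|M i j| <= c) -> compact A.
Proof.
move=> A_closed A_bounded.
have -> : A = vec_mx @` (vec_mx @^-1` A).
  apply/seteqP; split=> [M AM|_ [v Av <-] //]; by exists (mxvec M); rewrite /= mxvecK.
apply: continuous_compact; first exact: continuous_subspaceT vec_mx_continuous.
apply: (@subclosed_compact _ _
  [set v : 'rV[R]_(m * n) | forall k, `[- c, c]%classic (v ord0 k)]).
- by apply: preimage_closed A_closed => v _; exact: vec_mx_continuous.
- by apply: (@rV_compact _ _ (fun=> `[- c, c]%classic)) => k; exact: segment_compact.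
move=> v Av k; case/mxvec_indexP: k => i j.
by have := A_bounded _ Av i j; rewrite /= in_itv /= -ler_norml mxE.
Qed.

Lemma mx_closed_bounded_argmin (A : set 'M[R]_(m, n)) (c : R)
    (f : 'M[R]_(m, n) -> R) : closed A ->
  (forall M, A M -> forall i j, `|M i j| <= c) -> A !=set0 -> continuous f ->
  exists2 M, A M & forall M', A M' -> f M <= f M'.
Proof.
move=> A_closed A_bounded A_n0 f_cont.
have [M AM Mmin] := compact_EVT_min A_n0 (mx_closed_bounded_compact A_closed A_bounded)
  (continuous_subspaceT f_cont).
by exists M => [|M' AM']; [rewrite -inE | apply: Mmin; rewrite inE].
Qed.

End MatrixTopology.

Section RealContinuity.
Variables (R : realType) (T : topologicalType).
Implicit Types f g : T -> R.

Lemma continuous_sum (I : Type) (r : seq I) (P : pred I) (F : I -> T -> R) :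
  (forall i, continuous (F i)) -> continuous (fun x => \sum_(i <- r | P i) F i x).
Proof. by move=> F_cont; apply: (continuous_big (@add_continuous R)) => i _. Qed.

Lemma continuous_prod (I : Type) (r : seq I) (P : pred I) (F : I -> T -> R) :
  (forall i, continuous (F i)) -> continuous (fun x => \prod_(i <- r | P i) F i x).
Proof. by move=> F_cont; apply: (continuous_big (@mul_continuous R)) => i _. Qed.

Lemma continuous_addf f g : continuous f -> continuous g ->
  continuous (fun x => f x + g x).
Proof. by move=> f_cont g_cont x; apply: cvgD; [exact: f_cont | exact: g_cont]. Qed.

Lemma continuous_mulf f g : continuous f -> continuous g ->
  continuous (fun x => f x * g x).
Proof. by move=> f_cont g_cont x; apply: cvgM; [exact: f_cont | exact: g_cont]. Qed.

Lemma continuous_oppf f : continuous f -> continuous (fun x => - f x).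
Proof. by move=> f_cont x; apply: cvgN; exact: f_cont. Qed.

Lemma continuous_maxf f g : continuous f -> continuous g ->
  continuous (fun x => Num.max (f x) (g x)).
Proof.
by move=> f_cont g_cont x; apply: continuous_max; [exact: f_cont | exact: g_cont].
Qed.

Lemma closed_le_fun f g : continuous f -> continuous g -> closed [set x | f x <= g x].
Proof.
move=> f_cont g_cont.
rewrite (_ : [set x | _] = (fun x => g x - f x) @^-1` [set y | 0 <= y]); last first.
  by apply/seteqP; split => x /=; rewrite subr_ge0.
apply: preimage_closed; last exact: closed_ge.
by move=> x _; exact: continuous_addf g_cont (continuous_oppf f_cont) x.
Qed.

Lemma closed_eq_fun f g : continuous f -> continuous g -> closed [set x | f x = g x].
Proof.
move=> f_cont g_cont.
rewrite (_ : [set x | _] = [set x | f x <= g x] `&` [set x | g x <= f x]).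
  by apply: closedI; apply: closed_le_fun.
apply/seteqP; split => x /= => [->|[fg gf]]; first by rewrite lexx.
by apply/eqP; rewrite eq_le fg.
Qed.

End RealContinuity.

Lemma closed_forall (T : topologicalType) (I : Type) (P : I -> T -> Prop) :
  (forall i, closed [set x | P i x]) -> closed [set x | forall i, P i x].
Proof.
move=> P_closed; rewrite (_ : [set x | _] = \bigcap_(i in [set: I]) [set x | P i x]).
  by apply: closed_bigI => i _.
by apply/seteqP; split => x /= Px i => [_|]; exact: Px.
Qed.

Lemma closed_implies (T : topologicalType) (b : bool) (P : T -> Prop) :
  closed [set x | P x] -> closed [set x | b -> P x].
Proof.
case: b => P_closed.
  by rewrite (_ : [set x | _] = [set x | P x]) //; apply/seteqP; split => x /=; [apply|].
by rewrite (_ : [set x | _] = setT) ?closedT //; apply/seteqP; split.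
Qed.

Section MatrixContinuity.
Variables (R : realType) (n : nat).

Lemma continuous_mulmx_entry p q (A : 'M[R]_(p, n)) (B : 'M[R]_(n, q)) i j :
  continuous (fun K : 'M[R]_n => (A *m K *m B) i j).
Proof.
have -> : (fun K : 'M[R]_n => (A *m K *m B) i j) =
    fun K : 'M[R]_n => \sum_l (\sum_k A i k * K k l) * B l j.
  by apply/funext => K; rewrite mxE; apply: eq_bigr => l _; rewrite mxE.
apply: continuous_sum => l; apply: continuous_mulf; last exact: cst_continuous.
apply: continuous_sum => k; apply: continuous_mulf; first exact: cst_continuous.
exact: coord_continuous.
Qed.

Lemma continuous_det : continuous (fun K : 'M[R]_n => \det K).
Proof.
apply: continuous_sum => s; apply: continuous_mulf; first exact: cst_continuous.
by apply: continuous_prod => i; exact: coord_continuous.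
Qed.

End MatrixContinuity.

Lemma max0_midpoint_le (R : realType) (x y : R) :
  Num.max (2^-1 * (x + y)) 0 <= 2^-1 * (Num.max x 0 + Num.max y 0).
Proof.
have [? ?] : x <= Num.max x 0 /\ 0 <= Num.max x 0 by rewrite !le_max !lexx orbT.
have [? ?] : y <= Num.max y 0 /\ 0 <= Num.max y 0 by rewrite !le_max !lexx orbT.
by rewrite ge_max; apply/andP; split; lra.
Qed.

Lemma normr_max0 (R : realDomainType) (x : R) : `|x| = Num.max x 0 + Num.max (- x) 0.
Proof.
case: (leP 0 x) => [x_ge0|x_lt0].
  by rewrite ger0_norm // (max_idPr _) ?addr0 // oppr_le0.
by rewrite ltr0_norm // (max_idPl _) ?add0r // oppr_ge0 ltW.
Qed.

Lemma offdiag_term_ge0 (R : realType) (t s u v k : R) : 0 <= t ->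
  t * `|s| <= Num.min u v -> 0 <= t * s * k + (u * Num.max k 0 + v * Num.max (- k) 0).
Proof.
move=> t_ge0; rewrite le_min => /andP[tu tv].
have /andP[s_lo s_hi] : - `|s| <= s <= `|s| by rewrite -ler_norml.
have := ler_wpM2l t_ge0 s_lo; have := ler_wpM2l t_ge0 s_hi; rewrite mulrN => ? ?.
have [k_ge0|k_lt0] := leP 0 k.
  by rewrite (max_idPr (_ : - k <= 0)) ?oppr_le0 //; nra.
have nk_ge0 : 0 <= - k by rewrite oppr_ge0 ltW.
have : 0 <= - k * (v - t * s) by rewrite mulr_ge0 //; lra.
by rewrite (max_idPl nk_ge0); nra.
Qed.

Section PenalizedObjective.
Variables (R : realType) (d : nat) (S : 'M[R]_d) (a b : 'I_d -> 'I_d -> R).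

Definition offdiag_penalty (K : 'M[R]_d) : R :=
  \sum_i \sum_(j | i != j) (a i j * Num.max (K i j) 0 + b i j * Num.max (- K i j) 0).

Definition penalized_obj (K : 'M[R]_d) : R :=
  - ln (\det K) + \tr (S *m K) + offdiag_penalty K.

Definition sign_constrained (nonpos nonneg : 'I_d -> 'I_d -> bool) (K : 'M[R]_d) :=
  forall i j, i != j -> (nonpos i j -> K i j <= 0) /\ (nonneg i j -> 0 <= K i j).

Lemma offdiag_penalty_midpoint_le (A B : 'M[R]_d) :
  (forall i j, 0 <= a i j) -> (forall i j, 0 <= b i j) ->
  offdiag_penalty (2^-1 *: (A + B)) <= 2^-1 * (offdiag_penalty A + offdiag_penalty B).
Proof.
move=> a_ge0 b_ge0; rewrite -big_split mulr_sumr; apply: ler_sum => i _.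
rewrite -big_split mulr_sumr; apply: ler_sum => j _ /=; rewrite !mxE.
have := ler_wpM2l (a_ge0 i j) (max0_midpoint_le (A i j) (B i j)).
have := ler_wpM2l (b_ge0 i j) (max0_midpoint_le (- A i j) (- B i j)).
rewrite (_ : - (2^-1 * _) = 2^-1 * (- A i j + - B i j)); last by ring.
lra.
Qed.

Lemma penalized_obj_midpoint_lt (A B : 'M[R]_d) :
  (forall i j, 0 <= a i j) -> (forall i j, 0 <= b i j) ->
  pdmx A -> pdmx B -> A != B ->
  penalized_obj (2^-1 *: (A + B)) < 2^-1 * (penalized_obj A + penalized_obj B).
Proof.
move=> a_ge0 b_ge0 hA hB AB; have := ln_det_midpoint_lt hA hB AB.
have := offdiag_penalty_midpoint_le A B a_ge0 b_ge0.
rewrite /penalized_obj -scalemxAr mxtraceZ mulmxDr mxtraceD; lra.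
Qed.

Lemma sign_constrained_midpoint nonpos nonneg (A B : 'M[R]_d) :
  sign_constrained nonpos nonneg A -> sign_constrained nonpos nonneg B ->
  sign_constrained nonpos nonneg (2^-1 *: (A + B)).
Proof.
move=> hA hB i j ij; have [hA1 hA2] := hA i j ij; have [hB1 hB2] := hB i j ij.
rewrite !mxE; split => h; [have := hA1 h; have := hB1 h | have := hA2 h; have := hB2 h]; lra.
Qed.

Lemma penalized_obj_argmin_unique nonpos nonneg (K1 K2 : 'M[R]_d) :
  (forall i j, 0 <= a i j) -> (forall i j, 0 <= b i j) ->
  pdmx K1 -> sign_constrained nonpos nonneg K1 ->
  pdmx K2 -> sign_constrained nonpos nonneg K2 ->
  (forall K, pdmx K -> sign_constrained nonpos nonneg K ->
     penalized_obj K1 <= penalized_obj K) ->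
  (forall K, pdmx K -> sign_constrained nonpos nonneg K ->
     penalized_obj K2 <= penalized_obj K) ->
  K1 = K2.
Proof.
move=> a_ge0 b_ge0 hK1 cK1 hK2 cK2 K1min K2min; apply/eqP/negPn/negP => K12.
have := penalized_obj_midpoint_lt a_ge0 b_ge0 hK1 hK2 K12.
have := K1min _ (pdmx_midpoint hK1 hK2) (sign_constrained_midpoint cK1 cK2).
have := K1min _ hK2 cK2; have := K2min _ hK1 cK1; lra.
Qed.

End PenalizedObjective.

Section AdmissibleSet.
Variables (R : realType) (d : nat) (dl beta : R) (nonpos nonneg : 'I_d -> 'I_d -> bool).

Definition admissible_set : set 'M[R]_d :=
  [set K : 'M[R]_d | forall i j, K i j = K j i]
  `&` [set K | forall x : 'cV_d, 0 <= qform K x] `&` [set K | dl <= \det K]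
  `&` [set K | forall i, K i i <= beta] `&` sign_constrained nonpos nonneg.

Lemma admissible_set_closed : closed admissible_set.
Proof.
repeat apply: closedI.
- apply: closed_forall => i; apply: closed_forall => j.
  by apply: closed_eq_fun; exact: coord_continuous.
- apply: closed_forall => x; apply: closed_le_fun; first exact: cst_continuous.
  exact: continuous_mulmx_entry.
- by apply: closed_le_fun; [exact: cst_continuous | exact: continuous_det].
- apply: closed_forall => i.
  by apply: closed_le_fun; [exact: coord_continuous | exact: cst_continuous].
- apply: closed_forall => i; apply: closed_forall => j; apply: closed_implies.
  apply: closedI; apply: closed_implies.
    by apply: closed_le_fun; [exact: coord_continuous | exact: cst_continuous].
  by apply: closed_le_fun; [exact: cst_continuous | exact: coord_continuous].
Qed.

Lemma admissible_set_pdmx : 0 < dl -> forall K, admissible_set K -> pdmx K.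
Proof.
move=> dl_gt0 K [[[[sK psdK] detK] _] _]; apply: psdmx_unitmx_pdmx.
  by split=> //; apply/matrixP => i j; rewrite mxE sK.
by rewrite unitmxE unitfE gt_eqF // (lt_le_trans dl_gt0).
Qed.

Lemma admissible_set_bounded : 0 < dl ->
  forall K, admissible_set K -> forall i j, `|K i j| <= beta.
Proof.
move=> dl_gt0 K AK i j; have [[_ diagK] _] := AK.
have := psdmx_offdiag_le i j (pdmx_psdmx (admissible_set_pdmx dl_gt0 AK)).
by have := diagK i; have := diagK j; lra.
Qed.

End AdmissibleSet.

Section Existence.
Variables (R : realType) (d : nat) (S : 'M[R]_d) (a b : 'I_d -> 'I_d -> R).
Hypotheses (hS : psdmx S) (S_diag_gt0 : forall i, 0 < S i i).
Hypotheses (a_gt0 : forall i j, 0 < a i j) (b_gt0 : forall i j, 0 < b i j).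

Local Notation F := (penalized_obj S a b).
Local Notation pen := (offdiag_penalty a b).

Lemma offdiag_penalty_ge0 K : 0 <= pen K.
Proof.
apply: sumr_ge0 => i _; apply: sumr_ge0 => j _.
have max_ge0 (x : R) : 0 <= Num.max x 0 by rewrite le_max lexx orbT.
by rewrite addr_ge0 ?mulr_ge0 ?max_ge0 ?ltW ?a_gt0 ?b_gt0.
Qed.

Lemma penalized_obj_ge_ln_det K : pdmx K -> - ln (\det K) <= F K.
Proof.
move=> hK; have := mxtrace_psdmx_pdmx_ge0 hS hK; have := offdiag_penalty_ge0 K.
rewrite /penalized_obj; lra.
Qed.

Lemma penalty_scale_exists :
  exists2 t : R, 0 < t <= 1 & forall i j, t * `|S i j| <= Num.min (a i j) (b i j).
Proof.
pose c i j := Num.min (a i j) (b i j).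
have c_gt0 i j : 0 < c i j by rewrite lt_min a_gt0 b_gt0.
pose s := \sum_(p : 'I_d * 'I_d) `|S p.1 p.2| / c p.1 p.2.
have s_ge0 : 0 <= s by apply: sumr_ge0 => p _; rewrite divr_ge0 ?normr_ge0 ?ltW ?c_gt0.
have le_s i j : `|S i j| / c i j <= s.
  rewrite /s (bigD1 (i, j)) //= lerDl; apply: sumr_ge0 => p _.
  by rewrite divr_ge0 ?normr_ge0 ?ltW ?c_gt0.
have s1_gt0 : 0 < 1 + s by rewrite ltr_wpDr.
exists (1 + s)^-1 => [|i j].
  by rewrite invr_gt0 s1_gt0 invf_le1 // lerDl.
have := le_s i j; rewrite ler_pdivrMr // => le_sc.
by rewrite -/(c i j) mulrC ler_pdivrMr //; have := c_gt0 i j; nra.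
Qed.

(* As tr(SK) >= 0 it may be shrunk to t tr(SK), whose off-diagonal terms
   t S_ij K_ji the penalty dominates. *)
Lemma mxtrace_penalty_ge_diag t K : 0 <= t <= 1 ->
  (forall i j, t * `|S i j| <= Num.min (a i j) (b i j)) -> pdmx K ->
  t * \sum_i S i i * K i i <= \tr (S *m K) + pen K.
Proof.
move=> /andP[t_ge0 t_le1] tS hK.
have sK i j : K j i = K i j by rewrite -[in LHS]hK.1 mxE.
apply: le_trans (_ : t * \tr (S *m K) + pen K <= _); last first.
  by rewrite lerD2r ler_piMl // mxtrace_psdmx_pdmx_ge0.
rewrite /mxtrace !mulr_sumr /offdiag_penalty -big_split /=; apply: ler_sum => i _.
rewrite mxE (bigD1 i) //= mulrDr -addrA lerDl mulr_sumr.
rewrite (eq_bigl (fun j => i != j)) => [|j]; last by rewrite eq_sym.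
rewrite -big_split /=; apply: sumr_ge0 => j _; rewrite mulrA sK.
exact: offdiag_term_ge0.
Qed.

Lemma penalized_obj_ge_diag t K : 0 < t <= 1 ->
  (forall i j, t * `|S i j| <= Num.min (a i j) (b i j)) -> pdmx K ->
  \sum_i t * S i i / 2 * K i i + \sum_i (1 + ln (t * S i i / 2)) <= F K.
Proof.
move=> /andP[t_gt0 t_le1] tS hK; pose c i := t * S i i / 2.
change (\sum_i c i * K i i + \sum_i (1 + ln (c i)) <= F K).
have c_gt0 i : 0 < c i by rewrite divr_gt0 ?mulr_gt0.
have sum_ln_diag : \sum_i ln (K i i) <= \sum_i c i * K i i - \sum_i (1 + ln (c i)).
  rewrite -sumrB; apply: ler_sum => i _; have Kii_gt0 := pdmx_diag_gt0 i hK.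
  by have := ln_le_subr1 (mulr_gt0 (c_gt0 i) Kii_gt0); rewrite lnM ?posrE //; lra.
have := ln_det_le_sum_ln_diag hK.
have t01 : 0 <= t <= 1 by rewrite ltW.
have := mxtrace_penalty_ge_diag t01 tS hK.
have -> : t * \sum_i S i i * K i i = 2 * \sum_i c i * K i i.
  by rewrite !mulr_sumr; apply: eq_bigr => i _; rewrite /c; field.
rewrite /penalized_obj; lra.
Qed.

Lemma penalized_obj_sublevel_bounded (F0 : R) : exists beta, forall K,
  pdmx K -> F K <= F0 -> expR (- F0) <= \det K /\ forall i, K i i <= beta.
Proof.
have [t t01 tS] := penalty_scale_exists; have /andP[t_gt0 _] := t01.
pose c i := t * S i i / 2; have c_gt0 i : 0 < c i by rewrite divr_gt0 ?mulr_gt0.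
pose B0 := F0 - \sum_i (1 + ln (c i)).
exists (\sum_i `|B0| / c i) => K hK FK; split.
  have := penalized_obj_ge_ln_det hK => ln_det_ge.
  by rewrite -[\det K]lnK ?posrE ?pdmx_det_gt0 // ler_expR; lra.
move=> i; have Kdiag_ge0 j : 0 <= c j * K j j by rewrite mulr_ge0 ?ltW ?pdmx_diag_gt0.
have cKii : c i * K i i <= B0.
  have : \sum_j c j * K j j + \sum_j (1 + ln (c j)) <= F K.
    exact: penalized_obj_ge_diag t01 tS hK.
  rewrite (bigD1 i) //=.
  have : 0 <= \sum_(j | j != i) c j * K j j by apply: sumr_ge0.
  rewrite /B0; lra.
apply: le_trans (_ : `|B0| / c i <= _).
  by rewrite ler_pdivlMr // mulrC (le_trans cKii) ?ler_norm.
rewrite (bigD1 i) //= lerDl; apply: sumr_ge0 => j _.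
by rewrite divr_ge0 ?normr_ge0 ?ltW.
Qed.

(* ln is only continuous on (0, +oo); clamping det at dl > 0 does not change
   the objective on admissible_set. *)
Definition clamped_obj (dl : R) (K : 'M[R]_d) : R :=
  - ln (Num.max (\det K) dl) + \tr (S *m K) + pen K.

Lemma clamped_obj_continuous dl : 0 < dl -> continuous (clamped_obj dl).
Proof.
move=> dl_gt0; have coord i j := @coord_continuous R d d i j.
apply: continuous_addf; first apply: continuous_addf.
- apply: continuous_oppf => K.
  have max_cont : {for K, continuous (fun K : 'M[R]_d => Num.max (\det K) dl)}.
    by apply: continuous_maxf (@continuous_det R d) _ K; exact: cst_continuous.
  by apply: continuous_comp max_cont (continuous_ln _); rewrite lt_max dl_gt0 orbT.
- rewrite (_ : (fun K => _) = fun K => \sum_i (S *m K *m 1%:M) i i); last first.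
    by apply/funext => K; rewrite mulmx1.
  by apply: continuous_sum => i; exact: continuous_mulmx_entry.
- apply: continuous_sum => i; apply: continuous_sum => j.
  apply: continuous_addf; apply: continuous_mulf; try exact: cst_continuous.
    by apply: continuous_maxf; [|exact: cst_continuous].
  by apply: continuous_maxf; [exact: continuous_oppf | exact: cst_continuous].
Qed.

Theorem penalized_obj_argmin_exists nonpos nonneg :
  exists K, [/\ pdmx K, sign_constrained nonpos nonneg K &
    forall K', pdmx K' -> sign_constrained nonpos nonneg K' -> F K <= F K'].
Proof.
pose F0 := F 1%:M; pose dl := expR (- F0); have dl_gt0 : 0 < dl := expR_gt0 _.
have [beta sublevel] := penalized_obj_sublevel_bounded F0.
pose A := admissible_set dl beta nonpos nonneg.
have sublevel_A K : pdmx K -> sign_constrained nonpos nonneg K -> F K <= F0 -> A K.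
  move=> hK cK FK; have [detK diagK] := sublevel K hK FK.
  do 4 split => //; last exact: (pdmx_psdmx hK).2.
  by move=> i j; rewrite -[in LHS]hK.1 mxE.
have A1 : A 1%:M.
  apply: sublevel_A; [exact: pdmx1 | | exact: lexx].
  by move=> i j ij; rewrite mxE (negbTE ij).
have clamped_F K : A K -> clamped_obj dl K = F K.
  by case=> [[[[_ _] detK] _] _]; rewrite /clamped_obj (max_idPl detK).
have [K AK Kmin] := mx_closed_bounded_argmin (@admissible_set_closed _ _ dl beta nonpos nonneg)
  (admissible_set_bounded dl_gt0) (ex_intro _ _ A1) (clamped_obj_continuous dl_gt0).
have hK := admissible_set_pdmx dl_gt0 AK; have [_ cK] := AK.
exists K; split=> // K' hK' cK'; rewrite -clamped_F //; have [FK'|FK'] := leP (F K') F0.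
  have AK' := sublevel_A K' hK' cK' FK'.
  by rewrite -clamped_F //; exact: Kmin.
by apply: le_trans (ltW FK'); rewrite /F0 -(clamped_F _ A1); exact: Kmin.
Qed.

End Existence.

Section PenaltyTerm.
Variable R : realType.
Implicit Types (l u : \bar R) (x : R).

(* Infinite bounds become sign constraints, so the weight 1 returned for them
   (and for nonpositive reals) never matters. *)
Definition fin_coef (e : \bar R) : R := if e is r%:E then (if 0 < r then r else 1) else 1.

Lemma fin_coef_gt0 e : 0 < fin_coef e.
Proof. by case: e => [r| |] //=; case: ifP. Qed.

Lemma maxe_mul_sign l u x : (l < 0)%E -> (0 < u)%E ->
  (maxe (l * x%:E) (u * x%:E) = if (0 <= x)%R then u * x%:E else l * x%:E)%E.
Proof.
move=> l_lt0 u_gt0; case: (leP 0 x) => x0.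
  apply/max_idPr/(@le_trans _ _ 0%E).
    by apply: mule_le0_ge0; [exact: ltW | rewrite lee_fin].
  by apply: mule_ge0; [exact: ltW | rewrite lee_fin].
apply/max_idPl/(@le_trans _ _ 0%E).
  by apply: mule_ge0_le0; [exact: ltW | rewrite lee_fin ltW].
by apply: mule_le0; [exact: ltW | rewrite lee_fin ltW].
Qed.

Lemma penalty_term_ge0 l u x : (l < 0)%E -> (0 < u)%E ->
  (0 <= maxe (l * x%:E) (u * x%:E))%E.
Proof.
move=> l_lt0 u_gt0; rewrite maxe_mul_sign //; case: (leP 0 x) => x0.
  by apply: mule_ge0; [exact: ltW | rewrite lee_fin].
by apply: mule_le0; [exact: ltW | rewrite lee_fin ltW].
Qed.

Lemma penalty_term_fin l u x : (l < 0)%E -> (0 < u)%E ->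
  (u == +oo%E -> x <= 0) -> (l == -oo%E -> 0 <= x) ->
  (maxe (l * x%:E) (u * x%:E) =
    (fin_coef u * Num.max x 0 + fin_coef (- l) * Num.max (- x) 0)%:E)%E.
Proof.
move=> l_lt0 u_gt0 u_oo l_oo; rewrite maxe_mul_sign //; case: (leP 0 x) => x0.
  rewrite (max_idPr (_ : - x <= 0)) ?oppr_le0 // mulr0 addr0.
  case: u u_gt0 u_oo => [r| |] //= r_gt0 u_oo.
    by rewrite lte_fin in r_gt0; rewrite r_gt0 EFinM.
  have -> : x = 0 by apply/eqP; rewrite eq_le x0 u_oo.
  by rewrite mule0 mulr0.
rewrite (max_idPl (_ : 0 <= - x)) ?oppr_ge0 ?ltW // mulr0 add0r.
case: l l_lt0 l_oo => [r| |] //= r_lt0 l_oo.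
  by rewrite lte_fin in r_lt0; rewrite oppr_gt0 r_lt0 mulrNN EFinM.
by have := l_oo isT; rewrite leNgt x0.
Qed.

Lemma penalty_term_infty l u x : (l < 0)%E -> (0 < u)%E ->
  (u == +oo%E) && (0 < x) || (l == -oo%E) && (x < 0) ->
  (maxe (l * x%:E) (u * x%:E) = +oo)%E.
Proof.
move=> l_lt0 u_gt0; rewrite maxe_mul_sign //.
case/orP=> /andP[/eqP-> x0]; first by rewrite ltW // gt0_mulye.
by rewrite leNgt x0 /= lt0_mulNye.
Qed.

End PenaltyTerm.

Section GeneralizedObjective.
Variables (R : realType) (d : nat) (S : 'M[R]_d) (L U : 'M[\bar R]_d).
Hypothesis LU : forall i j, i != j -> (L i j < 0)%E /\ (0 < U i j)%E.

Local Notation F :=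
  (penalized_obj S (fun i j => fin_coef (U i j)) (fun i j => fin_coef (- L i j))).
Local Notation constrained :=
  (sign_constrained (fun i j => U i j == +oo%E) (fun i j => L i j == -oo%E)).

Lemma gen_obj_constrained K : constrained K -> gen_obj S L U K = (F K)%:E.
Proof.
move=> cK; rewrite /gen_obj /penalized_obj [in RHS]EFinD /offdiag_penalty -sumEFin.
congr (_ + _)%E; apply: eq_bigr => i _; rewrite -sumEFin; apply: eq_bigr => j ij.
by have [? ?] := LU ij; have [? ?] := cK i j ij; exact: penalty_term_fin.
Qed.

Lemma gen_obj_unconstrained K : ~ constrained K -> gen_obj S L U K = +oo%E.
Proof.
move=> ncK; have [i [j [ij bad]]] : exists i j, i != j /\
    (U i j == +oo%E) && (0 < K i j) || (L i j == -oo%E) && (K i j < 0).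
  apply: contrapT => none; apply: ncK => i j ij.
  by split=> oo; rewrite leNgt; apply/negP => K0; apply: none; exists i, j; rewrite oo K0 ?orbT.
have term_ge0 k l : k != l -> (0 <= maxe (L k l * (K k l)%:E) (U k l * (K k l)%:E))%E.
  by move=> kl; have [? ?] := LU kl; exact: penalty_term_ge0.
have neqNy (e : \bar R) : (0 <= e)%E -> e != -oo%E.
  by move=> e_ge0; rewrite -ltNye (lt_le_trans _ e_ge0).
rewrite /gen_obj (_ : \sum_i _ = +oo%E) ?addey //.
apply/esum_eqyP => [k _|]; first by apply/neqNy/sume_ge0 => l; exact: term_ge0.
exists i; split => //.
apply/esum_eqyP => [l kl|]; first exact/neqNy/term_ge0.
exists j; split => //.
by have [? ?] := LU ij; exact: penalty_term_infty.
Qed.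

Theorem gen_obj_unique_argmin : psdmx S -> (forall i, 0 < S i i) ->
  exists! K, pdmx K /\ forall K', pdmx K' -> (gen_obj S L U K <= gen_obj S L U K')%E.
Proof.
move=> hS S_diag_gt0; have [K [hK cK Kmin]] := penalized_obj_argmin_exists hS S_diag_gt0
  (fun i j => fin_coef_gt0 (U i j)) (fun i j => fin_coef_gt0 (- L i j))
  (fun i j => U i j == +oo%E) (fun i j => L i j == -oo%E).
exists K; split=> [|K2 [hK2 K2min]].
  split=> // K' hK'; have [cK'|ncK'] := pselect (constrained K').
    by rewrite !gen_obj_constrained // lee_fin; exact: Kmin.
  by rewrite (gen_obj_unconstrained ncK') leey.
have cK2 : constrained K2.
  apply: contrapT => ncK2; have := K2min K hK.
  by rewrite (gen_obj_unconstrained ncK2) gen_obj_constrained // leye_eq.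
apply: (penalized_obj_argmin_unique _ _ hK cK hK2 cK2 Kmin) => [i j|i j|K' hK' cK'].
- exact/ltW/fin_coef_gt0.
- exact/ltW/fin_coef_gt0.
- by have := K2min K' hK'; rewrite !gen_obj_constrained // lee_fin.
Qed.

End GeneralizedObjective.

Lemma glasso_obj_penalized (R : realType) d (S : 'M[R]_d) (rho : R) K :
  glasso_obj S rho K = penalized_obj S (fun _ _ => rho) (fun _ _ => rho) K.
Proof.
rewrite /glasso_obj /penalized_obj /offdiag_penalty mulr_sumr; congr (_ + _).
apply: eq_bigr => i _; rewrite mulr_sumr; apply: eq_bigr => j _.
by rewrite -mulrDr -normr_max0.
Qed.

Theorem glasso_obj_unique_argmin (R : realType) d (S : 'M[R]_d) (rho : R) :
  psdmx S -> (forall i, 0 < S i i) -> 0 < rho ->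
  exists! K, pdmx K /\ forall K', pdmx K' -> glasso_obj S rho K <= glasso_obj S rho K'.
Proof.
move=> hS S_diag_gt0 rho_gt0; pose free (i j : 'I_d) := false.
have free_sc (K : 'M[R]_d) : sign_constrained free free K by [].
have [K [hK _ Kmin]] := penalized_obj_argmin_exists hS S_diag_gt0
  (fun _ _ => rho_gt0) (fun _ _ => rho_gt0) free free.
exists K; split=> [|K2 [hK2 K2min]].
  by split=> // K' hK'; rewrite !glasso_obj_penalized; exact: Kmin.
have rho_ge0 (i j : 'I_d) : 0 <= rho := ltW rho_gt0.
apply: (penalized_obj_argmin_unique rho_ge0 rho_ge0 hK (free_sc K) hK2 (free_sc K2) Kmin).
by move=> K' hK' _; rewrite -!glasso_obj_penalized; exact: K2min.
Qed.

Theorem theorem8p7 (R : realType) (d : nat) (S : 'M[R]_d)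
  (hS : psdmx S) (hdiag : forall i : 'I_d, 0 < S i i) :
  (forall rho : R, 0 < rho ->
     exists! K : 'M[R]_d, pdmx K /\
       forall K' : 'M[R]_d, pdmx K' -> glasso_obj S rho K <= glasso_obj S rho K')
  /\
  (forall L U : 'M[\bar R]_d,
     (forall i j, L i j = L j i) -> (forall i j, U i j = U j i) ->
     (forall i, L i i = 0%E /\ U i i = 0%E) ->
     (forall i j, i != j -> (L i j < 0)%E /\ (0 < U i j)%E) ->
     exists! K : 'M[R]_d, pdmx K /\
       forall K' : 'M[R]_d, pdmx K' -> (gen_obj S L U K <= gen_obj S L U K')%E).
Proof.
split=> [rho rho_gt0 | L U _ _ _ LU]; first exact: glasso_obj_unique_argmin.
exact: gen_obj_unique_argmin.
Qed.
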